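(* Let $(c_k)_{k\ge0}\subset(0,\infty)$, $(\mu_k)_{k\ge0}\subset(0,\infty)$, and let $\rho$ be a $(0,\infty)$-valued random variable with law $\mathcal L_\rho$, $\mathbb E[\rho]=1$, not almost surely equal to $1$. Define $d_{k+1}=\mathbb E_{\mathcal L_\rho}\big[\frac{c_k(\mu_k\rho+d_k)}{c_k+(\mu_k\rho+d_k)}\big]$, $d^0_{k+1}=\frac{c_kd^0_k}{c_k+d^0_k}$ (the recursion with $\mathcal L_\rho=\delta_0$) and $d^1_{k+1}=\frac{c_k(\mu_k+d^1_k)}{c_k+(\mu_k+d^1_k)}$ (the recursion with $\mathcal L_\rho=\delta_1$). If $d^0_0=d_0=d^1_0\ge0$, then $d^0_k<d_k<d^1_k$ for all $k\in\mathbb N$. *)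

From Stdlib Require Import Reals List Classical ClassicalEpsilon.
Open Scope R_scope.

Set Implicit Arguments.

Section Prob.
Variable Omega : Type.

Definition sigma_algebra (F : (Omega -> Prop) -> Prop) : Prop :=
  F (fun _ => True) /\
  (forall A, F A -> F (fun w => ~ A w)) /\
  (forall A : nat -> Omega -> Prop, (forall n, F (A n)) ->
     F (fun w => exists n, A n w)).

Definition probability (F : (Omega -> Prop) -> Prop)
  (P : (Omega -> Prop) -> R) : Prop :=
  (forall A, F A -> 0 <= P A) /\
  P (fun _ => True) = 1 /\
  (forall A : nat -> Omega -> Prop, (forall n, F (A n)) ->
     (forall n m w, n <> m -> A n w -> A m w -> False) ->
     infinite_sum (fun n => P (A n)) (P (fun w => exists n, A n w))).

Definition prob_space F P : Prop := sigma_algebra F /\ probability F P.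

Definition measurable_fun (F : (Omega -> Prop) -> Prop) (f : Omega -> R) : Prop :=
  forall a : R, F (fun w => f w <= a).

Definition ind (A : Omega -> Prop) (w : Omega) : R :=
  if excluded_middle_informative (A w) then 1 else 0.

(* nonnegative simple functions, as lists of (coefficient, event) *)
Fixpoint sval (s : list (R * (Omega -> Prop))) (w : Omega) : R :=
  match s with
  | nil => 0
  | (a, A) :: t => a * ind A w + sval t w
  end.

Fixpoint sint (P : (Omega -> Prop) -> R) (s : list (R * (Omega -> Prop))) : R :=
  match s with
  | nil => 0
  | (a, A) :: t => a * P A + sint P t
  end.

Definition simple_below F (f : Omega -> R) (s : list (R * (Omega -> Prop))) : Prop :=
  Forall (fun p => 0 <= fst p /\ F (snd p)) s /\ forall w, sval s w <= f w.

(* Lebesgue expectation of a nonnegative measurable f: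
   E[f] = v  iff  v is the (finite) supremum of integrals of simple functions below f *)
Definition expectation_is F P (f : Omega -> R) (v : R) : Prop :=
  is_lub (fun x => exists s, simple_below F f s /\ x = sint P s) v.

End Prob.

(* Write [parallel_sum c x = c x / (c + x)]. The three recursions average
   [r |-> parallel_sum c_k (mu_k r + x)] against [delta_0], the law of [rho] and
   [delta_1]; this map is increasing in [x] and in [r] and strictly concave in [r].
   Since [rho > t] with positive probability for some [t > 0], the average against
   the law of [rho] strictly exceeds the value at [r = 0]. Since [E rho = 1] and
   [rho] is not a.s. [1], the tangent line at [r = 1] dominates the map, with a
   uniform gap on an event [|rho - 1| >= e] of positive probability, so the average
   is strictly below the value at [r = 1] (a strict Jensen inequality, proved by
   hand on the simple functions defining the expectation). Monotonicity in [x]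
   then propagates [d0_k <= d_k <= d1_k] by induction, strictly from [k = 1] on. *)

From Pilot Require Import Defs.
From Stdlib Require Import Reals List Classical ClassicalEpsilon
  FunctionalExtensionality PropExtensionality Lra Lia.
Open Scope R_scope.

Set Implicit Arguments.
Unset Strict Implicit.

Lemma pred_ext {Omega : Type} (A B : Omega -> Prop) :
  (forall w, A w <-> B w) -> A = B.
Proof.
  intros H; apply functional_extensionality; intro w.
  apply propositional_extensionality; auto.
Qed.

Lemma infinite_sum_eventually_zero (f : nat -> R) (N : nat) :
  (forall n, (N < n)%nat -> f n = 0) -> infinite_sum f (sum_f_R0 f N).
Proof.
  intros Hf.
  assert (Hconst : forall n, (N <= n)%nat -> sum_f_R0 f n = sum_f_R0 f N).
  { intros n Hn; induction Hn as [|n Hn IH]; auto.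
    simpl; rewrite IH, (Hf (S n)) by lia; ring. }
  intros eps Heps; exists N; intros n Hn.
  unfold Rdist; rewrite Hconst by lia.
  rewrite Rminus_diag, Rabs_R0; lra.
Qed.

Lemma inv_succ_pos n : 0 < / (INR n + 1).
Proof. apply Rinv_0_lt_compat; pose proof (pos_INR n); lra. Qed.

Lemma inv_succ_decr n : / (INR (S n) + 1) <= / (INR n + 1).
Proof. apply Rinv_le_contravar; pose proof (pos_INR n); rewrite ?S_INR; lra. Qed.

Lemma exists_inv_succ_lt r : 0 < r -> exists n, / (INR n + 1) < r.
Proof.
  intros Hr; destruct (archimed_cor1 r Hr) as [N [HN HN0]]; exists N.
  apply Rle_lt_trans with (/ INR N); auto.
  apply Rinv_le_contravar; [apply lt_0_INR; auto | lra].
Qed.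

(** * Parallel sums *)

(* [1 / (1/c + 1/x)] for [c, x > 0]. *)
Definition parallel_sum (c x : R) : R := c * x / (c + x).

Section ParallelSum.
Variable c : R.
Hypothesis Hc : 0 < c.

Lemma parallel_sum_nonneg x : 0 <= x -> 0 <= parallel_sum c x.
Proof.
  intros Hx; unfold parallel_sum, Rdiv.
  apply Rmult_le_pos; [nra | apply Rlt_le, Rinv_0_lt_compat; lra].
Qed.

Lemma parallel_sum_sub x y : 0 <= x -> 0 <= y ->
  parallel_sum c y - parallel_sum c x = c * c * (y - x) / ((c + x) * (c + y)).
Proof. intros; unfold parallel_sum; field; lra. Qed.

Lemma parallel_sum_le x y : 0 <= x -> x <= y -> parallel_sum c x <= parallel_sum c y.
Proof.
  intros Hx Hxy.
  assert (Hdiff : 0 <= c * c * (y - x) / ((c + x) * (c + y))).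
  { unfold Rdiv; apply Rmult_le_pos; [nra | apply Rlt_le, Rinv_0_lt_compat; nra]. }
  rewrite <- parallel_sum_sub in Hdiff; lra.
Qed.

Lemma parallel_sum_lt x y : 0 <= x -> x < y -> parallel_sum c x < parallel_sum c y.
Proof.
  intros Hx Hxy.
  assert (Hdiff : 0 < c * c * (y - x) / ((c + x) * (c + y))).
  { assert (0 < c * c) by nra.
    apply Rdiv_lt_0_compat; nra. }
  rewrite <- parallel_sum_sub in Hdiff; lra.
Qed.

Section Tangent.
Variable x0 : R.
Hypothesis Hx0 : 0 <= x0.

Let slope := c * c / ((c + x0) * (c + x0)).
Let tangent x := parallel_sum c x0 + slope * (x - x0).

Let slope_pos : 0 < slope.
Proof. apply Rdiv_lt_0_compat; apply Rmult_lt_0_compat; lra. Qed.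

Lemma parallel_sum_tangent_gap x : 0 <= x ->
  tangent x - parallel_sum c x = slope * ((x - x0) * (x - x0) / (c + x)).
Proof. intros; unfold tangent, slope, parallel_sum; field; lra. Qed.

Lemma parallel_sum_below_tangent x : 0 <= x -> parallel_sum c x <= tangent x.
Proof.
  intros Hx.
  assert (Hgap : 0 <= slope * ((x - x0) * (x - x0) / (c + x))).
  { apply Rmult_le_pos; [apply Rlt_le, slope_pos |].
    unfold Rdiv; apply Rmult_le_pos;
      [apply Rle_0_sqr | apply Rlt_le, Rinv_0_lt_compat; lra]. }
  rewrite <- parallel_sum_tangent_gap in Hgap; lra.
Qed.

Lemma parallel_sum_tangent_gap_ge x eta : 0 <= x -> 0 < eta ->
  x <= x0 - eta \/ x0 + eta <= x ->
  parallel_sum c x + slope * (eta * eta / (c + x0 + eta)) <= tangent x.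
Proof.
  intros Hx Heta Hfar.
  assert (Hsq : eta * eta / (c + x0 + eta) <= (x - x0) * (x - x0) / (c + x)).
  { assert (Hcross : eta * eta * (c + x) <= (x - x0) * (x - x0) * (c + x0 + eta)).
    { destruct Hfar as [Hlow | Hhigh].
      - assert (eta * eta <= (x - x0) * (x - x0)) by nra; nra.
      - assert (0 <= (x - x0 - eta) * (x - x0 + eta) * (c + x0)) by
          (apply Rmult_le_pos; nra).
        assert (0 <= eta * (x - x0) * (x - x0 - eta)) by
          (apply Rmult_le_pos; nra).
        nra. }
    unfold Rdiv.
    apply (Rmult_le_reg_r ((c + x0 + eta) * (c + x))); [nra |].
    replace (eta * eta * / (c + x0 + eta) * ((c + x0 + eta) * (c + x)))
      with (eta * eta * (c + x)) by (field; lra).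
    replace ((x - x0) * (x - x0) * / (c + x) * ((c + x0 + eta) * (c + x)))
      with ((x - x0) * (x - x0) * (c + x0 + eta)) by (field; lra).
    exact Hcross. }
  pose proof (parallel_sum_tangent_gap Hx) as Hgap.
  assert (slope * (eta * eta / (c + x0 + eta)) <=
          slope * ((x - x0) * (x - x0) / (c + x)))
    by (apply Rmult_le_compat_l; [apply Rlt_le, slope_pos | exact Hsq]).
  lra.
Qed.

End Tangent.
End ParallelSum.

(** * Finite sums and simple functions *)

Definition lsum {T : Type} (g : T -> R) (L : list T) : R :=
  fold_right (fun p acc => g p + acc) 0 L.

Lemma lsum_app T (g : T -> R) L1 L2 : lsum g (L1 ++ L2) = lsum g L1 + lsum g L2.
Proof. induction L1 as [|p L1 IH]; simpl; [ring | rewrite IH; ring]. Qed.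

Lemma lsum_flat_map T U (g : U -> R) (k : T -> list U) L :
  lsum g (flat_map k L) = lsum (fun p => lsum g (k p)) L.
Proof. induction L as [|p L IH]; simpl; auto; rewrite lsum_app, IH; auto. Qed.

Lemma lsum_map T U (g : U -> R) (f : T -> U) L :
  lsum g (map f L) = lsum (fun p => g (f p)) L.
Proof. induction L as [|p L IH]; simpl; auto; rewrite IH; auto. Qed.

Lemma lsum_ext T (g1 g2 : T -> R) L :
  (forall p, In p L -> g1 p = g2 p) -> lsum g1 L = lsum g2 L.
Proof. induction L as [|p L IH]; simpl; intros H; auto; rewrite H, IH; auto. Qed.

Lemma lsum_le T (g1 g2 : T -> R) L :
  (forall p, In p L -> g1 p <= g2 p) -> lsum g1 L <= lsum g2 L.
Proof.
  induction L as [|p L IH]; simpl; intros H; [lra |].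
  pose proof (H p (or_introl eq_refl)); pose proof (IH (fun q Hq => H q (or_intror Hq))).
  lra.
Qed.

Lemma lsum_add T (g1 g2 : T -> R) L :
  lsum (fun p => g1 p + g2 p) L = lsum g1 L + lsum g2 L.
Proof. induction L as [|p L IH]; simpl; [ring | rewrite IH; ring]. Qed.

Lemma lsum_scal T (g : T -> R) a L : lsum (fun p => a * g p) L = a * lsum g L.
Proof. induction L as [|p L IH]; simpl; [ring | rewrite IH; ring]. Qed.

Lemma sint_lsum Omega (P : (Omega -> Prop) -> R) s :
  sint P s = lsum (fun p => fst p * P (snd p)) s.
Proof. induction s as [|[a A] s IH]; simpl; auto; rewrite IH; auto. Qed.

Lemma sval_lsum Omega (s : list (R * (Omega -> Prop))) w :
  sval s w = lsum (fun p => fst p * Defs.ind (snd p) w) s.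
Proof. induction s as [|[a A] s IH]; simpl; auto; rewrite IH; auto. Qed.

Lemma ind_in Omega (A : Omega -> Prop) w : A w -> Defs.ind A w = 1.
Proof. unfold Defs.ind; destruct excluded_middle_informative; tauto. Qed.

Lemma ind_out Omega (A : Omega -> Prop) w : ~ A w -> Defs.ind A w = 0.
Proof. unfold Defs.ind; destruct excluded_middle_informative; tauto. Qed.

(* The atoms of the partition generated by the events of [s], each paired with
   the constant value of [sval s] on it. *)
Fixpoint atoms Omega (s : list (R * (Omega -> Prop))) : list (R * (Omega -> Prop)) :=
  match s with
  | nil => (0, fun _ => True) :: nil
  | (a, E) :: t => flat_map (fun p => (fst p + a, fun w => snd p w /\ E w)
                     :: (fst p, fun w => snd p w /\ ~ E w) :: nil) (atoms t)
  end.

Lemma atoms_sval Omega (s : list (R * (Omega -> Prop))) (h : R -> R) w :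
  lsum (fun p => h (fst p) * Defs.ind (snd p) w) (atoms s) = h (sval s w).
Proof.
  revert h; induction s as [|[a E] s IH]; simpl; intros h.
  - rewrite ind_in; auto; ring.
  - rewrite lsum_flat_map.
    destruct (classic (E w)) as [Hw | Hw].
    + rewrite ind_in by auto.
      replace (a * 1 + sval s w) with (sval s w + a) by ring.
      rewrite <- (IH (fun v => h (v + a))).
      apply lsum_ext; intros q _; simpl.
      rewrite (ind_out (A := fun w => snd q w /\ ~ E w)) by tauto.
      destruct (classic (snd q w)).
      * rewrite !ind_in; auto; ring.
      * rewrite !ind_out by tauto; ring.
    + rewrite ind_out by auto.
      replace (a * 0 + sval s w) with (sval s w) by ring.
      rewrite <- (IH h).
      apply lsum_ext; intros q _; simpl.
      rewrite (ind_out (A := fun w => snd q w /\ E w)) by tauto.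
      destruct (classic (snd q w)).
      * rewrite !ind_in; auto; ring.
      * rewrite !ind_out by tauto; ring.
Qed.

(** * Events and probabilities *)

Section SigmaAlgebra.
Context {Omega : Type} {F : (Omega -> Prop) -> Prop}.
Hypothesis HF : sigma_algebra F.

Lemma event_full : F (fun _ => True).
Proof. apply HF. Qed.

Lemma event_compl A : F A -> F (fun w => ~ A w).
Proof. apply HF. Qed.

Lemma event_countable_union (A : nat -> Omega -> Prop) :
  (forall n, F (A n)) -> F (fun w => exists n, A n w).
Proof. apply HF. Qed.

Lemma event_empty : F (fun _ => False).
Proof.
  replace (fun _ : Omega => False) with (fun _ : Omega => ~ True)
    by (apply pred_ext; tauto).
  apply event_compl, event_full.
Qed.

Lemma event_union A B : F A -> F B -> F (fun w => A w \/ B w).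
Proof.
  intros HA HB.
  replace (fun w => A w \/ B w) with
    (fun w => exists n : nat, (match n with O => A | _ => B end) w).
  - apply event_countable_union; intros [|n]; auto.
  - apply pred_ext; intro w; split.
    + intros [[|n] Hn]; auto.
    + intros [Hw | Hw]; [exists O | exists 1%nat]; auto.
Qed.

Lemma event_inter A B : F A -> F B -> F (fun w => A w /\ B w).
Proof.
  intros HA HB.
  replace (fun w => A w /\ B w) with (fun w => ~ (~ A w \/ ~ B w))
    by (apply pred_ext; intro w; tauto).
  apply event_compl, event_union; apply event_compl; auto.
Qed.

Lemma measurable_gt (f : Omega -> R) t :
  measurable_fun F f -> F (fun w => t < f w).
Proof.
  intros Hf.
  replace (fun w => t < f w) with (fun w => ~ f w <= t)
    by (apply pred_ext; intro w; lra).
  apply event_compl, Hf.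
Qed.

End SigmaAlgebra.

Section ProbabilitySpace.
Context {Omega : Type} {F : (Omega -> Prop) -> Prop} {P : (Omega -> Prop) -> R}.
Hypothesis HP : prob_space F P.

Let HF : sigma_algebra F := proj1 HP.

Lemma prob_full : P (fun _ => True) = 1.
Proof. apply HP. Qed.

Lemma prob_nonneg A : F A -> 0 <= P A.
Proof. apply HP. Qed.

Lemma prob_empty : P (fun _ => False) = 0.
Proof.
  set (a := P (fun _ => False)).
  assert (Hsum : Un_cv (sum_f_R0 (fun _ => a)) a).
  { pose proof (proj2 (proj2 (proj2 HP)) (fun _ _ => False)
      (fun _ => event_empty HF) (fun _ _ _ _ H _ => H)) as Hadd; cbv beta in Hadd.
    replace (fun w : Omega => exists _ : nat, False) with (fun _ : Omega => False)
      in Hadd by (apply pred_ext; intro w; split; [tauto | intros [_ []]]).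
    exact Hadd. }
  (* consecutive partial sums differ by [a] and have the same limit *)
  assert (Hdiff : Un_cv (fun n => sum_f_R0 (fun _ => a) (n + 1) -
                                  sum_f_R0 (fun _ => a) n) (a - a)).
  { apply CV_minus; [apply CV_shift' |]; exact Hsum. }
  replace (fun n => sum_f_R0 (fun _ => a) (n + 1) - sum_f_R0 (fun _ => a) n)
    with (fun _ : nat => a) in Hdiff
    by (apply functional_extensionality; intro n; rewrite Nat.add_1_r; simpl; ring).
  assert (Hconst : Un_cv (fun _ : nat => a) a).
  { intros eps Heps; exists O; intros n _.
    unfold Rdist; rewrite Rminus_diag, Rabs_R0; lra. }
  pose proof (UL_sequence _ _ _ Hconst Hdiff); lra.
Qed.

Lemma prob_ext A B : (forall w, A w <-> B w) -> P A = P B.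
Proof. intros H; rewrite (pred_ext H); auto. Qed.

Lemma prob_split X E : F X -> F E ->
  P X = P (fun w => X w /\ E w) + P (fun w => X w /\ ~ E w).
Proof.
  intros HX HE.
  set (A := fun n : nat => match n with
    | O => fun w => X w /\ E w
    | 1%nat => fun w => X w /\ ~ E w
    | _ => fun _ => False end).
  assert (HA : forall n, F (A n)).
  { intros [|[|n]]; simpl.
    - apply (event_inter HF); auto.
    - apply (event_inter HF); auto; apply (event_compl HF); auto.
    - apply (event_empty HF). }
  assert (Hdisj : forall n m w, n <> m -> A n w -> A m w -> False).
  { intros [|[|n]] [|[|m]] w Hnm; simpl; try tauto; lia. }
  pose proof (proj2 (proj2 (proj2 HP)) A HA Hdisj) as Hadd.
  replace (fun w => exists n, A n w) with X in Hadd.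
  2:{ apply pred_ext; intro w; split.
      - intro Hx; destruct (classic (E w)); [exists O | exists 1%nat]; simpl; auto.
      - intros [[|[|n]] Hn]; simpl in Hn; tauto. }
  refine (uniqueness_sum _ _ _ Hadd (@infinite_sum_eventually_zero _ 1%nat _)).
  intros [|[|n]] Hn; try lia; apply prob_empty.
Qed.

Lemma prob_mono A B : F A -> F B -> (forall w, A w -> B w) -> P A <= P B.
Proof.
  intros HA HB Hsub.
  rewrite (prob_split HB HA).
  rewrite (prob_ext (A := fun w => B w /\ A w) (B := A))
    by (intro w; specialize (Hsub w); tauto).
  assert (0 <= P (fun w => B w /\ ~ A w))
    by (apply prob_nonneg, (event_inter HF); auto; apply (event_compl HF); auto).
  lra.
Qed.

(* Countable additivity applied to the disjoint increments [A (S m) \ A m]. *)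
Lemma prob_increasing_union_null (A : nat -> Omega -> Prop) :
  (forall n, F (A n)) -> (forall n w, A n w -> A (S n) w) ->
  (forall n, P (A n) = 0) -> P (fun w => exists n, A n w) = 0.
Proof.
  intros HA Hincr Hnull.
  assert (Hmono : forall n m w, (n <= m)%nat -> A n w -> A m w)
    by (intros n m w Hnm; induction Hnm; auto).
  set (B := fun n => match n with
    | O => A O
    | S m => fun w => A (S m) w /\ ~ A m w end).
  assert (HB : forall n, F (B n)).
  { intros [|n]; simpl; auto.
    apply (event_inter HF); auto; apply (event_compl HF); auto. }
  assert (Hdisj : forall n m w, n <> m -> B n w -> B m w -> False).
  { assert (Hlt : forall n m w, (n < m)%nat -> B n w -> B m w -> False).
    { intros n [|m] w Hnm Hn Hm; [lia |].
      apply (proj2 Hm), (Hmono n); [lia |]; destruct n; simpl in Hn; tauto. }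
    intros n m w Hnm; destruct (Nat.lt_total n m) as [? | [? | ?]]; eauto. }
  pose proof (proj2 (proj2 (proj2 HP)) B HB Hdisj) as Hadd.
  replace (fun w => exists n, B n w) with (fun w => exists n, A n w) in Hadd.
  2:{ apply pred_ext; intro w; split.
      - intros [n Hn]; induction n as [|n IH]; [exists O; auto |].
        destruct (classic (A n w)); auto; exists (S n); simpl; auto.
      - intros [n Hn]; exists n; destruct n; simpl in Hn; tauto. }
  replace (fun n => P (B n)) with (fun _ : nat => 0) in Hadd.
  - exact (uniqueness_sum _ _ _ Hadd
             (@infinite_sum_eventually_zero _ 0%nat (fun _ _ => eq_refl))).
  - apply functional_extensionality; intros [|n]; simpl; [auto |].
    apply Rle_antisym.
    + exact (prob_nonneg (HB (S n))).
    + rewrite <- (Hnull (S n)); apply prob_mono; auto; [apply (HB (S n)) | tauto].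
Qed.

Lemma prob_increasing_union_pos (A : nat -> Omega -> Prop) :
  (forall n, F (A n)) -> (forall n w, A n w -> A (S n) w) ->
  0 < P (fun w => exists n, A n w) -> exists n, 0 < P (A n).
Proof.
  intros HA Hincr Hpos.
  apply NNPP; intro Hnone.
  assert (Hnull : forall n, P (A n) = 0).
  { intro n; apply Rle_antisym; [| exact (prob_nonneg (HA n))].
    apply Rnot_lt_le; intro Hlt; eauto. }
  rewrite (prob_increasing_union_null HA Hincr Hnull) in Hpos; lra.
Qed.

Lemma atoms_measurable s :
  (forall p, In p s -> F (snd p)) -> forall p, In p (atoms s) -> F (snd p).
Proof.
  induction s as [|[a E] s IH]; simpl.
  - intros _ p [<- | []]; apply (event_full HF).
  - intros Hs p Hp; apply in_flat_map in Hp; destruct Hp as [q [Hq Hp]].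
    assert (F (snd q)) by (apply IH; auto).
    assert (F E) by (apply (Hs (a, E)); auto).
    destruct Hp as [<- | [<- | []]]; simpl; apply (event_inter HF); auto.
    apply (event_compl HF); auto.
Qed.

Lemma atoms_prob_inter s C : (forall p, In p s -> F (snd p)) -> F C ->
  lsum (fun p => P (fun w => snd p w /\ C w)) (atoms s) = P C.
Proof.
  revert C; induction s as [|[a E] s IH]; simpl; intros C Hs HC.
  - rewrite Rplus_0_r; apply prob_ext; tauto.
  - rewrite lsum_flat_map, <- (IH C); auto.
    apply lsum_ext; intros q Hq; simpl.
    assert (F (snd q)) by (apply (atoms_measurable (s := s)); auto).
    assert (F E) by (apply (Hs (a, E)); auto).
    rewrite (prob_split (X := fun w => snd q w /\ C w) (E := E))
      by (try apply (event_inter HF); auto).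
    rewrite Rplus_0_r; f_equal; apply prob_ext; tauto.
Qed.

Lemma atoms_sint s : (forall p, In p s -> F (snd p)) ->
  lsum (fun p => fst p * P (snd p)) (atoms s) = sint P s.
Proof.
  induction s as [|[a E] s IH]; simpl; intros Hs.
  - ring.
  - rewrite lsum_flat_map, <- IH; auto.
    assert (F E) by (apply (Hs (a, E)); auto).
    rewrite <- (atoms_prob_inter (s := s) (C := E)); auto.
    rewrite <- lsum_scal, <- lsum_add.
    apply lsum_ext; intros q Hq; simpl.
    assert (F (snd q)) by (apply (atoms_measurable (s := s)); auto).
    rewrite (prob_split (X := snd q) (E := E)); auto; ring.
Qed.

Section LevelEvents.
Variable rho : Omega -> R.
Hypothesis Hmeas : measurable_fun F rho.

Lemma exists_prob_level_pos :
  (forall w, 0 < rho w) -> exists t, 0 < t /\ 0 < P (fun w => t < rho w).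
Proof.
  intros Hpos.
  set (A := fun n w => / (INR n + 1) < rho w).
  assert (HA : forall n, F (A n)) by (intro n; apply (measurable_gt HF), Hmeas).
  assert (Hincr : forall n w, A n w -> A (S n) w)
    by (intros n w; unfold A; pose proof (inv_succ_decr n); lra).
  assert (Hunion : 0 < P (fun w => exists n, A n w)).
  { rewrite (prob_ext (B := fun _ => True)), prob_full; [lra |].
    intro w; split; auto; intros _; apply exists_inv_succ_lt, Hpos. }
  destruct (prob_increasing_union_pos HA Hincr Hunion) as [n Hn].
  exists (/ (INR n + 1)); split; [apply inv_succ_pos | exact Hn].
Qed.

Lemma exists_prob_far_from_one :
  P (fun w => rho w = 1) <> 1 ->
  exists e, 0 < e /\ 0 < P (fun w => rho w <= 1 - e \/ 1 + e < rho w).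
Proof.
  intros Hne.
  set (A := fun n w => rho w <= 1 - / (INR n + 1) \/ 1 + / (INR n + 1) < rho w).
  assert (HA : forall n, F (A n))
    by (intro n; apply (event_union HF); [apply Hmeas | apply (measurable_gt HF), Hmeas]).
  assert (Hincr : forall n w, A n w -> A (S n) w)
    by (intros n w; unfold A; pose proof (inv_succ_decr n); lra).
  assert (Hcompl : forall w, ~ (exists n, A n w) <-> rho w = 1).
  { intro w; split.
    - intros Hw; apply NNPP; intro Hw1; apply Hw.
      destruct (exists_inv_succ_lt (r := Rabs (rho w - 1))) as [n Hn];
        [apply Rabs_pos_lt; lra |].
      exists n; unfold A; destruct (Rle_dec (rho w) 1).
      + rewrite Rabs_left1 in Hn by lra; lra.
      + rewrite Rabs_right in Hn by lra; lra.
    - intros Hw [n Hn]; unfold A in Hn; rewrite Hw in Hn.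
      pose proof (inv_succ_pos n); lra. }
  assert (HU : F (fun w => exists n, A n w)) by (apply (event_countable_union HF); auto).
  assert (Hunion : 0 < P (fun w => exists n, A n w)).
  { pose proof (prob_split (event_full HF) HU) as Hsplit.
    rewrite prob_full, (prob_ext (B := fun w => exists n, A n w)) in Hsplit by tauto.
    rewrite (prob_ext (A := fun w => True /\ ~ exists n, A n w)
                      (B := fun w => rho w = 1)) in Hsplit
      by (intro w; rewrite <- Hcompl; tauto).
    pose proof (prob_nonneg HU) as Hnonneg.
    destruct (Rle_lt_or_eq_dec _ _ Hnonneg) as [Hlt | Heq];
      [exact Hlt | exfalso; apply Hne; lra]. }
  destruct (prob_increasing_union_pos HA Hincr Hunion) as [n Hn].
  exists (/ (INR n + 1)); split; [apply inv_succ_pos | exact Hn].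
Qed.

End LevelEvents.

(** * Bounds on expectations *)

(* Jensen-type bound: [max 0 ((sval s - alpha) / beta)] is a simple function below
   [rho], so its integral is at most [m]. *)
Lemma sint_le_affine (rho : Omega -> R) m s alpha beta :
  (forall w, 0 <= rho w) -> expectation_is F P rho m -> 0 < beta ->
  (forall p, In p s -> F (snd p)) -> (forall w, sval s w <= alpha + beta * rho w) ->
  sint P s <= alpha + beta * m.
Proof.
  intros Hrho Hm Hbeta Hs Hle.
  set (h := fun v => Rmax 0 ((v - alpha) / beta)).
  set (t := map (fun p : R * (Omega -> Prop) => (h (fst p), snd p)) (atoms s)).
  assert (Ht : simple_below F rho t).
  { split.
    - apply Forall_forall; intros p Hp; unfold t in Hp; apply in_map_iff in Hp.
      destruct Hp as [q [<- Hq]]; simpl; split; [apply Rmax_l |].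
      apply (atoms_measurable (s := s)); auto.
    - intro w; rewrite sval_lsum; unfold t; rewrite lsum_map; simpl.
      rewrite (atoms_sval s h w); unfold h; apply Rmax_lub; auto.
      apply (Rmult_le_reg_r beta); auto.
      unfold Rdiv; rewrite Rmult_assoc, Rinv_l by lra.
      specialize (Hle w); lra. }
  assert (Hint_t : sint P t <= m) by (apply (proj1 Hm); exists t; auto).
  rewrite sint_lsum in Hint_t; unfold t in Hint_t; rewrite lsum_map in Hint_t;
    simpl in Hint_t.
  assert (Hmass : lsum (fun p : R * (Omega -> Prop) => P (snd p)) (atoms s) = 1).
  { rewrite <- prob_full, <- (atoms_prob_inter Hs (event_full HF)).
    apply lsum_ext; intros; apply prob_ext; tauto. }
  rewrite <- (atoms_sint (s := s)); auto.
  apply Rle_trans with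
    (lsum (fun p : R * (Omega -> Prop) => (alpha + beta * h (fst p)) * P (snd p))
          (atoms s)).
  - apply lsum_le; intros p Hp; apply Rmult_le_compat_r.
    + apply prob_nonneg, (atoms_measurable (s := s)); auto.
    + unfold h; apply Rle_trans with (alpha + beta * ((fst p - alpha) / beta)).
      * right; field; lra.
      * apply Rplus_le_compat_l, Rmult_le_compat_l; [lra | apply Rmax_r].
  - replace (lsum (fun p : R * (Omega -> Prop) => (alpha + beta * h (fst p)) * P (snd p))
               (atoms s))
      with (alpha * lsum (fun p : R * (Omega -> Prop) => P (snd p)) (atoms s) +
            beta * lsum (fun p : R * (Omega -> Prop) => h (fst p) * P (snd p)) (atoms s))
      by (rewrite <- !lsum_scal, <- lsum_add; apply lsum_ext; intros; ring).
    rewrite Hmass; nra.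
Qed.

Lemma expectation_gt_of_gap (f : Omega -> R) a b B v :
  expectation_is F P f v -> 0 <= a -> a < b -> F B -> 0 < P B ->
  (forall w, a <= f w) -> (forall w, B w -> b <= f w) -> a < v.
Proof.
  intros Hv Ha Hab HB HPB Hfa Hfb.
  set (s := (a, fun _ : Omega => True) :: (b - a, B) :: nil).
  assert (Hs : simple_below F f s).
  { split.
    - constructor; [split; [exact Ha | apply (event_full HF)] |].
      constructor; [split; [simpl; lra | exact HB] | constructor].
    - intro w; simpl; rewrite (ind_in (A := fun _ => True)) by auto.
      destruct (classic (B w)) as [Hw | Hw].
      + rewrite ind_in by auto; specialize (Hfb w Hw); lra.
      + rewrite ind_out by auto; specialize (Hfa w); lra. }
  assert (Hle : sint P s <= v) by (apply (proj1 Hv); exists s; auto).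
  simpl in Hle; rewrite prob_full in Hle.
  assert (0 < (b - a) * P B) by (apply Rmult_lt_0_compat; lra).
  lra.
Qed.

Lemma expectation_lt_of_affine_gap (rho f : Omega -> R) m alpha beta delta A v :
  expectation_is F P f v ->
  (forall w, 0 <= rho w) -> expectation_is F P rho m -> 0 < beta ->
  0 < delta -> F A -> 0 < P A ->
  (forall w, f w <= alpha + beta * rho w) ->
  (forall w, A w -> f w + delta <= alpha + beta * rho w) -> v < alpha + beta * m.
Proof.
  intros Hv Hrho Hm Hbeta Hdelta HA HPA Hf HfA.
  assert (Hub : v <= alpha + beta * m - delta * P A).
  { apply (proj2 Hv); intros x [s [[Hcoef Hsf] ->]].
    assert (Hext : sint P ((delta, A) :: s) <= alpha + beta * m).
    { apply (sint_le_affine Hrho Hm Hbeta).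
      - intros p [<- | Hp]; auto; rewrite Forall_forall in Hcoef; apply (Hcoef p Hp).
      - intro w; specialize (Hsf w); simpl.
        destruct (classic (A w)) as [Hw | Hw].
        + rewrite ind_in by auto; specialize (HfA w Hw); lra.
        + rewrite ind_out by auto; specialize (Hf w); lra. }
    simpl in Hext; lra. }
  assert (0 < delta * P A) by (apply Rmult_lt_0_compat; auto).
  lra.
Qed.

End ProbabilitySpace.

Section ParallelSumExpectation.
Context {Omega : Type} {F : (Omega -> Prop) -> Prop} {P : (Omega -> Prop) -> R}.
Hypothesis HP : prob_space F P.
Variables (rho : Omega -> R) (c mu x : R).
Hypotheses (Hmeas : measurable_fun F rho) (Hpos : forall w, 0 < rho w)
  (Hc : 0 < c) (Hmu : 0 < mu) (Hx : 0 <= x).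

Lemma expectation_parallel_sum_gt v :
  expectation_is F P (fun w => parallel_sum c (mu * rho w + x)) v ->
  parallel_sum c x < v.
Proof.
  intros Hv.
  destruct (exists_prob_level_pos HP Hmeas Hpos) as [t [Ht HPt]].
  apply (expectation_gt_of_gap HP (b := parallel_sum c (mu * t + x))
           (B := fun w => t < rho w) Hv).
  - apply parallel_sum_nonneg; auto.
  - apply parallel_sum_lt; auto; nra.
  - apply (measurable_gt (proj1 HP)); auto.
  - exact HPt.
  - intro w; pose proof (Hpos w); apply parallel_sum_le; auto; nra.
  - intros w Hw; apply parallel_sum_le; nra.
Qed.

(* [parallel_sum c] is strictly concave, so its tangent at [mu + x] beats it by a
   fixed margin wherever [rho] stays [e]-away from its mean [1]. *)
Lemma expectation_parallel_sum_lt v :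
  expectation_is F P rho 1 -> P (fun w => rho w = 1) <> 1 ->
  expectation_is F P (fun w => parallel_sum c (mu * rho w + x)) v ->
  v < parallel_sum c (mu + x).
Proof.
  intros Hmean Hne Hv.
  destruct (exists_prob_far_from_one HP Hmeas Hne) as [e [He HPe]].
  set (x0 := mu + x).
  set (slope := c * c / ((c + x0) * (c + x0))).
  assert (Hslope : 0 < slope)
    by (apply Rdiv_lt_0_compat; apply Rmult_lt_0_compat; unfold x0; lra).
  replace (parallel_sum c x0) with
    (parallel_sum c x0 - slope * mu + slope * mu * 1) by ring.
  apply (expectation_lt_of_affine_gap HP
           (delta := slope * ((mu * e) * (mu * e) / (c + x0 + mu * e)))
           (A := fun w => rho w <= 1 - e \/ 1 + e < rho w)
           Hv (fun w => Rlt_le _ _ (Hpos w)) Hmean); auto.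
  - apply Rmult_lt_0_compat; auto.
  - apply Rmult_lt_0_compat; auto.
    assert (0 < mu * e) by (apply Rmult_lt_0_compat; auto).
    apply Rdiv_lt_0_compat; unfold x0; nra.
  - apply (event_union (proj1 HP));
      [apply Hmeas | apply (measurable_gt (proj1 HP)), Hmeas].
  - intro w; pose proof (Hpos w).
    replace (parallel_sum c x0 - slope * mu + slope * mu * rho w)
      with (parallel_sum c x0 + slope * (mu * rho w + x - x0)) by (unfold x0; ring).
    apply parallel_sum_below_tangent; unfold x0; auto; nra.
  - intros w Hw; pose proof (Hpos w).
    replace (parallel_sum c x0 - slope * mu + slope * mu * rho w)
      with (parallel_sum c x0 + slope * (mu * rho w + x - x0)) by (unfold x0; ring).
    assert (Heta : 0 < mu * e) by (apply Rmult_lt_0_compat; auto).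
    apply parallel_sum_tangent_gap_ge; unfold x0; auto; [nra | nra |].
    destruct Hw as [Hlow | Hhigh]; [left | right]; nra.
Qed.

End ParallelSumExpectation.

Unset Implicit Arguments.

Theorem theorem3p9
  (Omega : Type) (F : (Omega -> Prop) -> Prop) (P : (Omega -> Prop) -> R)
  (rho : Omega -> R) (c mu d0 d d1 : nat -> R) :
  prob_space F P ->
  measurable_fun F rho ->
  (forall w, 0 < rho w) ->
  expectation_is F P rho 1 ->
  P (fun w => rho w = 1) <> 1 ->
  (forall k, 0 < c k) ->
  (forall k, 0 < mu k) ->
  (forall k, expectation_is F P
      (fun w => c k * (mu k * rho w + d k) / (c k + (mu k * rho w + d k)))
      (d (S k))) ->
  (forall k, d0 (S k) = c k * d0 k / (c k + d0 k)) ->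
  (forall k, d1 (S k) = c k * (mu k + d1 k) / (c k + (mu k + d1 k))) ->
  d0 0%nat = d 0%nat -> d 0%nat = d1 0%nat -> 0 <= d 0%nat ->
  forall k : nat, (1 <= k)%nat -> d0 k < d k /\ d k < d1 k.
Proof.
  intros HP Hmeas Hpos Hmean Hne Hc Hmu Hd Hd0 Hd1 Hinit0 Hinit1 Hinit.
  assert (Hstep : forall k, 0 <= d0 k -> d0 k <= d k -> d k <= d1 k ->
                  d0 (S k) < d (S k) /\ d (S k) < d1 (S k)).
  { intros k H0 H01 H1.
    assert (Hdk : 0 <= d k) by lra.
    rewrite Hd0, Hd1; split.
    - apply Rle_lt_trans with (parallel_sum (c k) (d k)).
      + apply parallel_sum_le; auto.
      + exact (expectation_parallel_sum_gt HP Hmeas Hpos (Hc k) (Hmu k) Hdk (Hd k)).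
    - apply Rlt_le_trans with (parallel_sum (c k) (mu k + d k)).
      + exact (expectation_parallel_sum_lt HP Hmeas Hpos (Hc k) (Hmu k) Hdk
                 Hmean Hne (Hd k)).
      + apply parallel_sum_le; auto; pose proof (Hmu k); lra. }
  assert (Hinv : forall k, 0 <= d0 k /\ d0 k <= d k /\ d k <= d1 k).
  { induction k as [|k [H0 [H01 H1]]]; [lra |].
    destruct (Hstep k H0 H01 H1).
    split; [rewrite Hd0; apply parallel_sum_nonneg |]; auto; lra. }
  intros [|k] Hk; [lia |].
  destruct (Hinv k) as [H0 [H01 H1]]; auto.
Qed.
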